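(* Let $\square$ be a finite cube, $\mathbf a$ a configuration and $F\subset E_d(\square)$ such that every edge of $F$ has both endpoints in $\mathscr C_{bc}^{\mathbf a^F}(\square)$. Let $u$ follow the canonical grain extension rule relative to $\mathbf a$ on $\square$. Then for every $G\subset F$ and every $x\in\square\setminus\mathscr C_{bc}^{\mathbf a^F}(\square)$, $u^G(x)=u^G([x])$; consequently $(D_Fu)(x)=(D_Fu)([x])$ for every such $x$.
   Context: Bond configurations $\mathbf a\in\{0,1\}^{E_d}$ on $\mathbb Z^d$, with $\ell^\infty$ distance $\mathrm{dist}$. For a cube $\square$: $E_d(\square)$ its nearest-neighbour edges, $\partial\square=\{x\in\square:\exists y\sim x,y\notin\square\}$. For a configuration $\mathbf b$, $\mathscr C_{bc}^{\mathbf b}(\square)=\{x\in\square: x$ is joined to $\partial\square$ by a $\mathbf b$-open path inside $\square\}$ (boundary-connecting clusters; it contains $\partial\square$), and for $x\in\square$, $\mathcal O^{\mathbf b}(x)$ is the set of vertices joined to $x$ by a $\mathbf b$-open path inside $\square$. $\mathbf a^G(e)=\mathbf 1_{e\in G}+\mathbf a(e)\mathbf 1_{e\notin G}$. Canonical grain relative to base $\mathbf a$: for $G\subset E_d(\square)$, $[x]^G=x$ if $x\in\mathscr C_{bc}^{\mathbf a^G}(\square)$, and otherwise $[x]^G=\arg\min_{y\in\mathscr C_{bc}^{\mathbf a}(\square)}\mathrm{dist}(y,\mathcal O^{\mathbf a^G}(x))$ with ties broken by a fixed lexicographic order; $[x]=[x]^\emptyset$. A function $u$ of the configuration and of $x\in\square$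 follows the canonical grain extension rule (relative to $\mathbf a$) if $u(\mathbf a^G,x)=u(\mathbf a^G,[x]^G)$ for all $G\subset E_d(\square)$, $x\in\square$. Write $u^G(x)=u(\mathbf a^G,x)$ and $(D_Fu)(x)=\sum_{G\subset F}(-1)^{|F\setminus G|}u^G(x)$. *)

From HB Require Import structures.
From mathcomp Require Import all_boot all_order all_algebra.
From mathcomp Require Import finmap.
Set Implicit Arguments. Unset Strict Implicit. Unset Printing Implicit Defensive.
Import Order.TTheory GRing.Theory Num.Theory.
Local Open Scope fset_scope.

Definition pt (d : nat) := {ffun 'I_d -> int}.

Definition shiftp d (x : pt d) (i : 'I_d) : pt d :=
  [ffun j => (x j + ((j == i) : nat)%:Z)%R].
Definition unshiftp d (x : pt d) (i : 'I_d) : pt d :=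
  [ffun j => (x j - ((j == i) : nat)%:Z)%R].

(* Nearest-neighbour edges of Z^d: the pair (x, i) stands for the edge
   {x, x + e_i}; every edge has exactly one such representation. *)
Definition edge d := (pt d * 'I_d)%type.

Definition config d := edge d -> bool.

Definition cfg_with d (a : config d) (G : {fset edge d}) : config d :=
  fun e => (e \in G) || a e.

Definition dist d (x y : pt d) : nat := \max_(i < d) absz (x i - y i)%R.

Definition lex_lt d (x y : pt d) : Prop :=
  exists i : 'I_d, (forall j : 'I_d, (j < i)%N -> x j = y j) /\ (x i < y i)%R.
Definition lex_le d (x y : pt d) : Prop := x = y \/ lex_lt x y.

Definition incube d (c : pt d) (n : nat) (x : pt d) : bool :=
  [forall i, (c i <= x i)%R && (x i < c i + n%:Z)%R].

Definition cube_edge d (c : pt d) n (e : edge d) : bool :=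
  incube c n e.1 && incube c n (shiftp e.1 e.2).

Definition cube_bdry d (c : pt d) n (x : pt d) : bool :=
  incube c n x &&
  [exists i, ~~ incube c n (shiftp x i) || ~~ incube c n (unshiftp x i)].

Definition adj_in d (c : pt d) n (b : config d) (x y : pt d) : bool :=
  [&& incube c n x, incube c n y &
   [exists i, ((y == shiftp x i) && b (x, i)) || ((x == shiftp y i) && b (y, i))]].

Definition opath d (c : pt d) n (b : config d) (x y : pt d) : Prop :=
  incube c n x /\ exists p : seq (pt d), path (adj_in c n b) x p /\ last x p = y.

Definition Cbc d (c : pt d) n (b : config d) (x : pt d) : Prop :=
  incube c n x /\ exists y, cube_bdry c n y /\ opath c n b x y.

(* dist(y, O^b(x)) <= dist(y', O^b(x)) (the minimum over the finite,
   nonempty set O^b(x) written out). *)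
Definition dist_O_le d (c : pt d) n (b : config d) (x y y' : pt d) : Prop :=
  forall z', opath c n b x z' -> exists z, opath c n b x z /\ (dist y z <= dist y' z')%N.

Definition is_minimiser d (c : pt d) n (a b : config d) (x y : pt d) : Prop :=
  Cbc c n a y /\ forall y', Cbc c n a y' -> dist_O_le c n b x y y'.

(* Canonical grain relative to base a:  grain c n a G x y  <->  y = [x]^G. *)
Definition grain d (c : pt d) n (a : config d) (G : {fset edge d}) (x y : pt d) : Prop :=
  (Cbc c n (cfg_with a G) x /\ y = x) \/
  (~ Cbc c n (cfg_with a G) x /\
   is_minimiser c n a (cfg_with a G) x y /\
   forall y', is_minimiser c n a (cfg_with a G) x y' -> lex_le y y').

Definition grain_rule d (R : Type) (c : pt d) n (a : config d)
  (u : config d -> pt d -> R) : Prop :=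
  forall (G : {fset edge d}), (forall e, e \in G -> cube_edge c n e) ->
  forall x, incube c n x -> forall y, grain c n a G x y ->
  u (cfg_with a G) x = u (cfg_with a G) y.

Definition DF d (R : zmodType) (a : config d) (F : {fset edge d})
  (u : config d -> pt d -> R) (x : pt d) : R :=
  (\sum_(G <- fpowerset F) (u (cfg_with a G) x) *~ ((-1) ^+ #|` F `\` G|))%R.

From HB Require Import structures.
From mathcomp Require Import all_boot all_order all_algebra.
From mathcomp Require Import finmap.
Local Open Scope fset_scope.
Set Implicit Arguments. Unset Strict Implicit.

(* If x is not in C_bc^{a^F}, then no endpoint of an edge of F
   is a^F-connected to x, since these endpoints all lie in C_bc^{a^F}.  Hence
   for G ⊆ F an a^G-open path from x never crosses an edge of G, so the open
   cluster O^{a^G}(x) equals O^a(x).  The canonical grain only sees x through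
   this cluster, so [x]^G = [x], and the extension rule gives
   u^G(x) = u^G([x]) for each term of D_F u. *)

Section OpenClusters.

Variables (d : nat) (c : pt d) (n : nat).

Lemma adj_in_mono (b1 b2 : config d) :
  (forall e, b1 e -> b2 e) -> forall x y, adj_in c n b1 x y -> adj_in c n b2 x y.
Proof.
move=> b12 x y /and3P [cx cy /existsP [i hi]].
apply/and3P; split=> //; apply/existsP; exists i.
by case/orP: hi => /andP [-> /b12 ->]; rewrite ?orbT.
Qed.

Lemma opath_mono (b1 b2 : config d) :
  (forall e, b1 e -> b2 e) -> forall x y, opath c n b1 x y -> opath c n b2 x y.
Proof.
move=> b12 x y [cx [p [hp <-]]]; split=> //; exists p; split=> //.
exact: sub_path (adj_in_mono b12) _ _ hp.
Qed.

Lemma opath_refl (b : config d) x : incube c n x -> opath c n b x x.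
Proof. by move=> cx; split=> //; exists [::]. Qed.

Lemma opath_trans (b : config d) x w y :
  opath c n b x w -> opath c n b w y -> opath c n b x y.
Proof.
move=> [cx [p [hp hpw]]] [_ [q [hq hqy]]]; split=> //; exists (p ++ q).
by rewrite cat_path last_cat hpw hp hq.
Qed.

Lemma opath_adj (b : config d) x w y :
  opath c n b x w -> adj_in c n b w y -> opath c n b x y.
Proof.
move=> hxw hwy; apply: (opath_trans hxw); split; first by case/and3P: hwy.
by exists [:: y]; rewrite /= hwy.
Qed.

Lemma Cbc_opath (b : config d) x w :
  opath c n b x w -> Cbc c n b w -> Cbc c n b x.
Proof.
move=> hxw [_ [y [by_ hwy]]]; split; first by case: hxw.
by exists y; split=> //; apply: opath_trans hwy.
Qed.

Lemma cfg_with_subset (a : config d) (G F : {fset edge d}) :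
  G `<=` F -> forall e, cfg_with a G e -> cfg_with a F e.
Proof. by rewrite /cfg_with => /fsubsetP GF e /orP [/GF -> | ->]; rewrite ?orbT. Qed.

Lemma cfg_with_fset0 (a : config d) (G : {fset edge d}) e :
  cfg_with a fset0 e -> cfg_with a G e.
Proof. exact: cfg_with_subset (fsub0set G) e. Qed.

(* A step out of w can only cross an edge having w as an endpoint. *)
Lemma adj_in_cfg_with_off (b : config d) (G : {fset edge d}) w y :
  (forall e, e \in G -> e.1 <> w /\ shiftp e.1 e.2 <> w) ->
  adj_in c n (cfg_with b G) w y -> adj_in c n b w y.
Proof.
move=> offG /and3P [cw cy /existsP [i hi]].
apply/and3P; split=> //; apply/existsP; exists i.
case/orP: hi => /andP [/eqP hyw /orP [inG | ->]]; rewrite ?hyw ?eqxx ?orbT //.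
- by case: (offG _ inG).
- by case: (offG _ inG) => _ /=; rewrite -hyw.
Qed.

Lemma opath_cfg_with_off (b : config d) (G : {fset edge d}) x :
  (forall e, e \in G ->
     ~ opath c n (cfg_with b G) x e.1 /\
     ~ opath c n (cfg_with b G) x (shiftp e.1 e.2)) ->
  forall z, opath c n (cfg_with b G) x z -> opath c n b x z.
Proof.
move=> offG z [cx [p [hp hpz]]]; split=> //; exists p; split=> //.
have path_off q w : opath c n (cfg_with b G) x w ->
    path (adj_in c n (cfg_with b G)) w q -> path (adj_in c n b) w q.
  elim: q w => [//|y q IHq] w hxw /= /andP [hwy hq].
  have offw e : e \in G -> e.1 <> w /\ shiftp e.1 e.2 <> w.
    by move=> /offG [h1 h2]; split=> hw; [apply: h1 | apply: h2]; rewrite hw.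
  rewrite (adj_in_cfg_with_off offw hwy) /=.
  exact: IHq (opath_adj hxw hwy) hq.
exact: path_off (opath_refl _ cx) hp.
Qed.

End OpenClusters.

Section CanonicalGrain.

Variables (d : nat) (c : pt d) (n : nat) (a : config d).

Lemma is_minimiser_eq (b1 b2 : config d) x :
  (forall z, opath c n b1 x z <-> opath c n b2 x z) ->
  forall y, is_minimiser c n a b1 x y <-> is_minimiser c n a b2 x y.
Proof.
move=> O12 y; rewrite /is_minimiser /dist_O_le.
by split=> -[Cy miny]; split=> // y' Cy' z' /O12 hz';
  have [z [/O12 hz le_z]] := miny y' Cy' z' hz'; exists z.
Qed.

Lemma Cbc_eq (b1 b2 : config d) x :
  (forall z, opath c n b1 x z <-> opath c n b2 x z) ->
  Cbc c n b1 x <-> Cbc c n b2 x.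
Proof.
by move=> O12; split=> -[cx [y [by_ /O12 hxy]]]; split=> //; exists y.
Qed.

Lemma grain_eq (G1 G2 : {fset edge d}) x :
  (forall z, opath c n (cfg_with a G1) x z <-> opath c n (cfg_with a G2) x z) ->
  forall y, grain c n a G1 x y -> grain c n a G2 x y.
Proof.
move=> O12 y [[/(Cbc_eq O12) C2 ->] | [/(Cbc_eq O12) nC2 [min1 least1]]].
  by left.
right; split=> //; split; first exact/(is_minimiser_eq O12).
by move=> y' /(is_minimiser_eq O12) /least1.
Qed.

Lemma opath_cfg_with_subset_off (F G : {fset edge d}) x :
  (forall e, e \in F ->
     Cbc c n (cfg_with a F) e.1 /\ Cbc c n (cfg_with a F) (shiftp e.1 e.2)) ->
  ~ Cbc c n (cfg_with a F) x -> G `<=` F ->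
  forall z, opath c n (cfg_with a G) x z <-> opath c n (cfg_with a fset0) x z.
Proof.
move=> CF nCx GF z; split; last exact: opath_mono (@cfg_with_fset0 _ a G) x z.
have a_fset0 e : a e -> cfg_with a fset0 e by rewrite /cfg_with => ->; rewrite orbT.
move=> /(opath_cfg_with_off _) hxz; apply: opath_mono a_fset0 _ _ (hxz _).
move=> e eG; have [C1 C2] := CF e (fsubsetP GF e eG).
by split=> /(opath_mono (cfg_with_subset GF)) hx; apply: nCx; apply: Cbc_opath hx _.
Qed.

End CanonicalGrain.

Theorem lemma6p1 (d : nat) (c : pt d) (n : nat) (a : config d)
  (F : {fset edge d}) (R : zmodType) (u : config d -> pt d -> R) :
  (forall e, e \in F -> cube_edge c n e) ->
  (forall e, e \in F ->
     Cbc c n (cfg_with a F) e.1 /\ Cbc c n (cfg_with a F) (shiftp e.1 e.2)) ->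
  grain_rule c n a u ->
  forall x, incube c n x -> ~ Cbc c n (cfg_with a F) x ->
  forall bx, grain c n a fset0 x bx ->
    (forall G : {fset edge d}, G `<=` F ->
       u (cfg_with a G) x = u (cfg_with a G) bx) /\
    DF a F u x = DF a F u bx.
Proof.
move=> Fcube CF rule x cx nCx bx grain_bx.
have uG_eq G : G `<=` F -> u (cfg_with a G) x = u (cfg_with a G) bx.
  move=> GF; apply: rule => //; first by move=> e /(fsubsetP GF) /Fcube.
  apply: grain_eq grain_bx => z.
  by apply: iff_sym; apply: (opath_cfg_with_subset_off CF nCx GF).
split=> //; rewrite /DF; apply: eq_big_seq => G.
by rewrite fpowersetE => /uG_eq ->.
Qed.
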